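(* Let $A=T_n\langle S;T\rangle$ be a Boolean Toeplitz matrix, with $S,T$ nonempty subsets of $\{1,\dots,n-1\}$, such that $\max S+\min T\le n$ and $\min S+\max T\le n$. Then there exists a positive integer $M$ such that for every integer $m>M$, the Boolean power $A^m$ is a Toeplitz matrix.
   Context: Boolean arithmetic on $\{0,1\}$: $1+1=1$. $T_n\langle S;T\rangle$ is the $n\times n$ $(0,1)$-matrix whose $(i,j)$-entry is $1$ iff $j-i\in S$ or $i-j\in T$. A matrix $(c_{ij})$ is Toeplitz if $c_{ij}$ depends only on $j-i$. *)

From mathcomp Require Import all_boot.
Set Implicit Arguments. Unset Strict Implicit. Unset Printing Implicit Defensive.

Definition bmx (n : nat) := 'I_n -> 'I_n -> bool.

Definition bmul n (A B : bmx n) : bmx n :=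
  fun i j => [exists k : 'I_n, A i k && B k j].

Definition bid n : bmx n := fun i j => i == j.

Fixpoint bpow n (A : bmx n) (m : nat) : bmx n :=
  match m with
  | 0 => @bid n
  | m'.+1 => bmul A (bpow A m')
  end.

(* T_n<S;T>: entry (i,j) is 1 iff j-i in S or i-j in T (differences as integers). *)
Definition toeplitzST n (S T : {set 'I_n}) : bmx n :=
  fun i j => ((i <= j) && [exists s in S, val s == j - i])
          || ((j <= i) && [exists t in T, val t == i - j]).

Definition is_toeplitz n (C : bmx n) : Prop :=
  (* j - i = j' - i' over the integers, written without subtraction *)
  forall i j i' j' : 'I_n, j + i' = j' + i ->
    C i j = C i' j'.

Definition maxS n (S : {set 'I_n}) : nat := \max_(s in S) val s.
Definition minS n (S : {set 'I_n}) : nat := \big[minn/n]_(s in S) val s.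

From mathcomp Require Import all_boot zify.
Set Implicit Arguments. Unset Strict Implicit. Unset Printing Implicit Defensive.

(* An entry (i, j) of A^m is 1 iff there is a walk of length m from i to j inside
   {0, ..., n-1} whose up-steps lie in S and whose down-steps lie in T.  Let c = min S,
   b = min T and N = c + b.  By pigeonhole, all but boundedly many steps of a walk come
   in blocks of N equal steps, and these blocks can be traded for steps +c and -b with
   the same total length and displacement.  A multiset of steps containing many -b's is
   realized greedily (go up when possible, otherwise go down), and max S + min T <= n,
   min S + max T <= n guarantee that the down-step is available whenever the up-step is
   not.  So for large m, A^m (i, j) = 1 iff some step lists of total length m have
   displacement j - i, which depends only on j - i. *)

Inductive walk (R : nat -> nat -> Prop) : nat -> nat -> nat -> Prop :=
| walk0 x : walk R 0 x x
| walkS m x y z : R x y -> walk R m y z -> walk R m.+1 x z.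

Lemma walk_cat R m1 m2 x y z :
  walk R m1 x y -> walk R m2 y z -> walk R (m1 + m2) x z.
Proof. by elim=> // k a b c Rab _ IH /IH; rewrite addSn; apply: walkS. Qed.

Lemma walk_rev R m x y : walk R m x y -> walk (fun a b => R b a) m y x.
Proof.
elim=> [a|k a b c Rab _ IH]; first exact: walk0.
by rewrite -addn1; apply: walk_cat IH (walkS Rab (walk0 _ _)).
Qed.

Section GreedyWalk.
Variables (R : nat -> nat -> Prop) (n b : nat).
Hypothesis R_down : forall p, p + b < n -> R (p + b) p.

Lemma walk_down q x z : x < n -> x = z + q * b -> walk R q x z.
Proof.
elim: q x => [|q IHq] x x_lt E; subst x; first by rewrite addn0; apply: walk0.
rewrite mulSn in x_lt *; have -> : z + (b + q * b) = (z + q * b) + b by lia.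
by apply: walkS (R_down _) (IHq _ _ _) => //; lia.
Qed.

(* Going up whenever possible never gets stuck: if x + u >= n then x >= b. *)
Lemma walk_greedy (ups : seq nat) q x z :
  (forall p u, u \in ups -> p + u < n -> R p (p + u)) ->
  {in ups, forall u, u + b <= n} ->
  x < n -> z < n -> x + sumn ups = z + q * b ->
  walk R (size ups + q) x z.
Proof.
elim: ups q x => [|u us IHus] q x R_up ups_b x_lt z_lt /= E.
  by apply: walk_down; rewrite // -E addn0.
have R_up' p v : v \in us -> p + v < n -> R p (p + v).
  by move=> v_us; apply: R_up; rewrite inE v_us orbT.
have us_b : {in us, forall v, v + b <= n}.
  by move=> v v_us; apply: ups_b; rewrite inE v_us orbT.
have u_b : u + b <= n by apply: ups_b; rewrite mem_head.
elim: q x x_lt E => [|q IHq] x x_lt E; have [xu_lt|xu_ge] := ltnP (x + u) n;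
  try by rewrite addSn; apply: walkS (R_up _ _ (mem_head _ _) xu_lt) (IHus _ _ _ _ _ _ _);
    rewrite //=; lia.
- lia.
- have -> : x = (x - b) + b by lia.
  by rewrite addnS; apply: walkS (R_down _) (IHq _ _ _); rewrite /=; lia.
Qed.

End GreedyWalk.

Lemma sumn_filterC1 v (l : seq nat) :
  sumn l = sumn (filter (predC1 v) l) + count_mem v l * v.
Proof. by elim: l => //= x l ->; case: eqVneq => [->|_] /=; lia. Qed.

Lemma size_filterC1 (T : eqType) (v : T) l :
  size l = size (filter (predC1 v) l) + count_mem v l.
Proof. by rewrite size_filter -(count_predC (pred1 v) l) addnC. Qed.

Lemma sumn_le_size_mul k (l : seq nat) : {in l, forall x, x < k} -> sumn l <= k * size l.
Proof.
elim: l => //= x l IHl lt_k; rewrite mulnS leq_add ?IHl //.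
  by apply: ltnW; apply: lt_k; rewrite mem_head.
by move=> y l_y; apply: lt_k; rewrite inE l_y orbT.
Qed.

Lemma bounded_seq_decomp N k (l : seq nat) : 0 < N -> {in l, forall x, x < k} ->
  exists l' l'' : seq nat, [/\ {subset l' <= l}, size l' <= k * N,
    sumn l = sumn l' + N * sumn l'' & size l = size l' + N * size l''].
Proof.
move=> N_gt0; elim: k l => [|k IHk] l l_lt.
  case: l l_lt => [_ | x l /(_ x (mem_head _ _))] //.
  by exists [::], [::]; rewrite /= !muln0.
have [|l1 [l2 [sub1 size1 sum1 sz1]]] := IHk (filter (predC1 k) l).
  move=> x; rewrite mem_filter => /andP [/= ne_xk /l_lt].
  by rewrite ltnS leq_eqVlt (negbTE ne_xk).
set c := count_mem k l.
exists (l1 ++ nseq (c %% N) k), (l2 ++ nseq (c %/ N) k); split.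
- move=> x; rewrite mem_cat => /orP [/sub1 | ]; first by rewrite mem_filter => /andP [].
  rewrite mem_nseq => /andP [c_gt0 /eqP ->]; rewrite -has_pred1 has_count.
  exact: leq_trans c_gt0 (leq_mod _ _).
- by rewrite size_cat size_nseq mulSn; have := ltn_pmod c N_gt0; lia.
- rewrite (sumn_filterC1 k l) sum1 !sumn_cat !sumn_nseq -/c {1}(divn_eq c N); lia.
- rewrite (size_filterC1 k l) sz1 !size_cat !size_nseq -/c {1}(divn_eq c N); lia.
Qed.

Definition vals n (A : {set 'I_n}) : seq nat := [seq val a | a in A].

Lemma vals_lt n (A : {set 'I_n}) u : u \in vals A -> u < n.
Proof. by case/imageP => a _ ->; apply: ltn_ord. Qed.

(* [n * N] bounds the number of residual steps after the pigeonhole decomposition and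
   [n + n * (n * N)] the size of their displacement. *)
Definition walk_bound n N := 2 * (n * N) + N.+1 * (n + n * (n * N)).

Section ToeplitzWalks.
Variables (n : nat) (S T : {set 'I_n}).

Definition step (x y : nat) : Prop :=
  [/\ x < n, y < n & (exists2 s, s \in vals S & x + s = y)
                      \/ (exists2 t, t \in vals T & y + t = x)].

Lemma toeplitzST_step (i j : 'I_n) : toeplitzST S T i j <-> step i j.
Proof.
split.
- case/orP=> /andP [le_ij /existsP [a /andP [Aa /eqP Ea]]]; split=> //.
  + by left; exists (val a); [exact: image_f | lia].
  + by right; exists (val a); [exact: image_f | lia].
- case=> _ _ [[s /imageP [a Sa ->] /= E] | [t /imageP [a Ta ->] /= E]]; apply/orP.
  + left; apply/andP; split; first lia.
    by apply/existsP; exists a; rewrite Sa /=; apply/eqP; lia.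
  + right; apply/andP; split; first lia.
    by apply/existsP; exists a; rewrite Ta /=; apply/eqP; lia.
Qed.

Lemma bpow_walk m (i j : 'I_n) :
  bpow (toeplitzST S T) m i j <-> walk step m i j.
Proof.
elim: m i j => [|m IHm] i j /=.
  split=> [/eqP -> | W0]; first exact: walk0.
  by apply/eqP/val_inj; inversion W0.
split=> [/existsP [k /andP [ik kj]] | W].
  by apply: (walkS (y := k)); [apply/toeplitzST_step | apply/IHm].
inversion W as [|m' x y z xy yz]; subst.
have y_lt : y < n by case: xy.
apply/existsP; exists (Ordinal y_lt); apply/andP; split.
  exact/toeplitzST_step.
exact/IHm.
Qed.

Lemma walk_step_lists m x y : walk step m x y ->
  exists U D, [/\ {subset U <= vals S}, {subset D <= vals T},
                  m = size U + size D & x + sumn U = y + sumn D].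
Proof.
elim=> [a | k a b c [_ _ [[s Ss E] | [t Tt E]]] _ [U [D [US DT -> IH]]]].
- by exists [::], [::].
- exists (s :: U), D; split=> //=; last lia.
  by move=> u; rewrite inE => /predU1P [-> | /US].
- exists U, (t :: D); split=> //=; [|by rewrite addnS | lia].
  by move=> u; rewrite inE => /predU1P [-> | /DT].
Qed.

Lemma step_up x s : s \in vals S -> x + s < n -> step x (x + s).
Proof. by move=> Ss lt_n; split=> //; [lia | left; exists s]. Qed.

Lemma step_down x t : t \in vals T -> x + t < n -> step (x + t) x.
Proof. by move=> Tt lt_n; split=> //; [lia | right; exists t]. Qed.

Section ExtremeSteps.
Variables c b : nat.
Hypotheses (Sc : c \in vals S) (Tb : b \in vals T) (c_gt0 : 0 < c) (b_gt0 : 0 < b).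
Hypotheses (S_b : {in vals S, forall s, s + b <= n})
           (T_c : {in vals T, forall t, c + t <= n}).

Lemma walk_of_steps U D p q x z :
  {subset U <= vals S} -> {subset D <= vals T} -> x < n -> z < n ->
  (x + sumn U) %/ b <= q -> x + sumn U + p * c = z + sumn D + q * b ->
  walk step (size U + size D + p + q) x z.
Proof.
move=> US DT x_lt z_lt q1_le E.
(* Walk greedily from x down to r = (x + sumn U) %% b, and backwards from z to r. *)
set q1 := (x + sumn U) %/ b; set r := (x + sumn U) %% b.
have r_lt : r < n by apply: leq_trans (ltn_pmod _ b_gt0) (ltnW (vals_lt Tb)).
have Er : x + sumn U = r + q1 * b by rewrite /r /q1 [RHS]addnC -divn_eq.
have up_walk : walk step (size U + q1) x r.
  apply: (walk_greedy (R := step) (n := n) (b := b)) Er => //.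
  - by move=> y lt_n; apply: step_down.
  - by move=> y s /US; apply: step_up.
  - by move=> s /US; apply: S_b.
set D2 := D ++ nseq (q - q1) b.
have down_walk : walk (fun y y' => step y' y) (size D2 + p) z r.
  apply: (walk_greedy (n := n) (b := c)) => //.
  - by move=> y lt_n; apply: step_up.
  - by move=> y t; rewrite mem_cat => /orP [/DT | /nseqP [-> _]]; apply: step_down.
  - move=> t; rewrite mem_cat => /orP [/DT /T_c | /nseqP [-> _]]; last have := T_c Tb; lia.
  have : q1 * b <= q * b by rewrite leq_mul2r q1_le orbT.
  rewrite sumn_cat sumn_nseq mulnBr (mulnC b q) (mulnC b q1); lia.
have := walk_cat up_walk (walk_rev down_walk).
by rewrite size_cat size_nseq; congr walk; lia.
Qed.

Lemma walk_of_balanced_steps U D x z :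
  {subset U <= vals S} -> {subset D <= vals T} -> x < n -> z < n ->
  walk_bound n (c + b) < size U + size D -> x + sumn U = z + sumn D ->
  walk step (size U + size D) x z.
Proof.
move=> US DT x_lt z_lt big E.
move: big; rewrite /walk_bound; set N := c + b; set L := n * N; set K := n + n * L.
move=> big; have N_gt0 : 0 < N by rewrite addn_gt0 c_gt0.
have [U' [U'' [sub_U size_U' sum_U size_U]]] :=
  bounded_seq_decomp N_gt0 (fun u (Uu : u \in U) => vals_lt (US u Uu)).
have [D' [D'' [sub_D size_D' sum_D size_D]]] :=
  bounded_seq_decomp N_gt0 (fun t (Dt : t \in D) => vals_lt (DT t Dt)).
have sum_U' : sumn U' <= n * L.
  apply: leq_trans (sumn_le_size_mul (fun u Uu => vals_lt (US u (sub_U u Uu)))) _.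
  by rewrite leq_mul2l size_U' orbT.
have sum_D' : sumn D' <= n * L.
  apply: leq_trans (sumn_le_size_mul (fun t Dt => vals_lt (DT t (sub_D t Dt)))) _.
  by rewrite leq_mul2l size_D' orbT.
set A := size U'' + size D''; set m' := N * A.
have m_eq : size U + size D = size U' + size D' + m'.
  by rewrite size_U size_D /m' /A mulnDr; lia.
have m'_big : N.+1 * K < m' by lia.
have cA : N * (c * A) = c * m' by rewrite mulnCA.
have m'_le_c : m' <= c * m' := leq_pmull _ c_gt0.
have m'_le_b : m' <= b * m' := leq_pmull _ b_gt0.
have Nm' : N * m' = c * m' + b * m' := mulnDl _ _ _.
have sum_U''_le : sumn U'' <= c * A + sumn D''.
  by rewrite -(leq_pmul2l N_gt0) mulnDr; lia.
(* The N-fold blocks U'', D'' are traded for m' - q steps +c and q steps -b. *)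
set q := c * A + sumn D'' - sumn U''.
have Eq : c * m' + x + sumn U' = z + sumn D' + N * q by rewrite mulnBr mulnDr; lia.
have q_le : q <= m' by rewrite -(leq_pmul2l N_gt0); lia.
have K_lt_q : K < q by rewrite -(ltn_pmul2l N_gt0); move: m'_big; rewrite mulSn; lia.
rewrite m_eq -(subnK q_le) addnA.
apply: (walk_of_steps (p := m' - q)) => //.
- by move=> u /sub_U /US.
- by move=> t /sub_D /DT.
- by apply: leq_trans (leq_div _ _) _; lia.
- have : q * c <= m' * c by rewrite leq_mul2r q_le orbT.
  have : N * q = c * q + b * q := mulnDl _ _ _.
  rewrite mulnBl (mulnC q c) (mulnC m' c) (mulnC q b); lia.
Qed.

Lemma bpow_shift m (i j i' j' : 'I_n) :
  walk_bound n (c + b) < m -> j + i' = j' + i ->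
  bpow (toeplitzST S T) m i j -> bpow (toeplitzST S T) m i' j'.
Proof.
move=> big shift /bpow_walk /walk_step_lists [U [D [US DT m_eq E]]].
by apply/bpow_walk; rewrite m_eq; apply: walk_of_balanced_steps => //; lia.
Qed.

End ExtremeSteps.
End ToeplitzWalks.

Lemma minS_le n (A : {set 'I_n}) a : a \in A -> minS A <= a.
Proof.
rewrite /minS => Aa; have : a \in index_enum 'I_n by rewrite mem_index_enum.
elim: (index_enum _) => //= x r IHr; rewrite inE big_cons => /predU1P [<- | /IHr].
  by rewrite Aa geq_minl.
by case: (x \in A) => //; rewrite geq_min => ->; rewrite orbT.
Qed.

Lemma minS_vals n (A : {set 'I_n}) : A != set0 -> minS A \in vals A.
Proof.
case/set0Pn=> a Aa; move: (minS_le Aa); rewrite /minS.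
elim/big_ind: _ => [| x y IHx IHy | i Ai _]; last exact: image_f.
  by rewrite leqNgt ltn_ord.
by rewrite /minn; case: ltnP => _; [exact: IHx | exact: IHy].
Qed.

Lemma maxS_ge n (A : {set 'I_n}) u : u \in vals A -> u <= maxS A.
Proof. by case/imageP=> a Aa ->; apply: leq_bigmax_cond. Qed.

Theorem theorem2p10 (n : nat) (S T : {set 'I_n}) :
  S != set0 -> T != set0 ->
  (forall s, s \in S -> 0 < val s) ->
  (forall t, t \in T -> 0 < val t) ->
  maxS S + minS T <= n ->
  minS S + maxS T <= n ->
  exists M : nat, 0 < M /\
    forall m : nat, M < m -> is_toeplitz (bpow (toeplitzST S T) m).
Proof.
move=> S_n0 T_n0 S_gt0 T_gt0 maxS_minT minS_maxT.
have Sc := minS_vals S_n0; have Tb := minS_vals T_n0.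
have c_gt0 : 0 < minS S by case/imageP: (Sc) => s /S_gt0 ? ->.
have b_gt0 : 0 < minS T by case/imageP: (Tb) => t /T_gt0 ? ->.
have S_b : {in vals S, forall s, s + minS T <= n} by move=> s /maxS_ge; lia.
have T_c : {in vals T, forall t, minS S + t <= n} by move=> t /maxS_ge; lia.
exists (walk_bound n (minS S + minS T)).+1; split=> // m big i j i' j' shift.
by apply/idP/idP; apply: (bpow_shift Sc Tb) => //; lia.
Qed.
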